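(* For any positive integers $q,k,t$ there exists a constant $f(q,k,t)$ such that the following holds. Let $D=(V,A)$ be a Steiner rooted $k$-arc-connected directed graph with root $r$ and a set $S\subseteq V\setminus\{r\}$ of $t$ terminals. Let $\mathcal{C}$ be a family of pairwise vertex-disjoint directed cycles in $D$ with $|\mathcal{C}|\ge f(q,k,t)$ such that every $C\in\mathcal{C}$ is $s$-essential for every $s\in S$. Then there exist $C_1,\ldots,C_q\in\mathcal{C}$ such that for every $s\in S$, either $(C_1,\ldots,C_q)$ or $(C_q,\ldots,C_1)$ is an $s$-ordered sequence of directed cycles.
   Context: Let $D=(V,A)$ be a directed graph with root $r\in V$ and terminal set $S\subseteq V\setminus\{r\}$; it is Steiner rooted $k$-arc-connected if for every $s\in S$ there are $k$ pairwise arc-disjoint directed $r$-$s$ paths. For $s\in S$, a set $U\subseteq V$ is an $s$-cut if $r\in U$ and $s\notin U$; it is a tight $s$-cut if moreover the number of arcs leaving $U$ equals $k$. A set $U$ properly intersects a directed cycle $C$ if $V(C)\cap U\neq\emptyset$ and $V(C)\setminus U\neq\emptyset$. A directed cycle $C$ is $s$-essential if some tight $s$-cut properly intersects $C$. A sequence of directed cycles $(C_1,\ldots,C_q)$ is $s$-ordered if there exist tight $s$-cuts $U_1,\ldots,U_q$ such that $V(C_i)\subseteq U_j$ for all $i<j$, $V(C_i)\cap U_j=\emptyset$ for all $i>j$, and $U_i$ properly intersects $C_i$ for every $i$. *)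

(* A digraph is a finite vertex type V, a finite arc type A
   (parallel arcs allowed) and maps tl/hd : A -> V giving tail and head. *)
From mathcomp Require Import all_boot.
Set Implicit Arguments. Unset Strict Implicit. Unset Printing Implicit Defensive.

Section Digraph.
Variables (V A : finType) (tl hd : A -> V).

Fixpoint is_walk (x y : V) (p : seq A) : bool :=
  match p with
  | [::] => x == y
  | a :: p' => (tl a == x) && is_walk (hd a) y p'
  end.

Definition dpath (x y : V) (p : seq A) : bool :=
  is_walk x y p && uniq (x :: map hd p).

Definition k_arc_disjoint_paths (k : nat) (r s : V) : Prop :=
  exists P : 'I_k -> seq A,
    (forall i, dpath r s (P i)) /\
    (forall i j, i != j -> [disjoint (P i) & (P j)]).

Definition steiner_rooted_k_arc_connected (k : nat) (r : V) (S : {set V}) : Prop :=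
  forall s, s \in S -> k_arc_disjoint_paths k r s.

Definition out_deg (U : {set V}) : nat :=
  #|[set a : A | (tl a \in U) && (hd a \notin U)]|.

Definition s_cut (r s : V) (U : {set V}) : bool := (r \in U) && (s \notin U).

Definition tight_s_cut (k : nat) (r s : V) (U : {set V}) : bool :=
  s_cut r s U && (out_deg U == k).

Definition arc_rel : rel V := fun x y => [exists a : A, (tl a == x) && (hd a == y)].

Definition dcycle (c : seq V) : bool :=
  [&& c != [::], uniq c & cycle arc_rel c].

Definition properly_intersects (U : {set V}) (c : seq V) : bool :=
  has (fun v => v \in U) c && has (fun v => v \notin U) c.

Definition s_essential (k : nat) (r s : V) (c : seq V) : Prop :=
  exists U : {set V}, tight_s_cut k r s U && properly_intersects U c.

Definition s_ordered (k : nat) (r s : V) (C : seq (seq V)) : Prop :=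
  exists U : nat -> {set V},
    (forall j, j < size C -> tight_s_cut k r s (U j)) /\
    (forall i j, i < j -> j < size C -> all (fun v => v \in U j) (nth [::] C i)) /\
    (forall i j, j < i -> i < size C -> all (fun v => v \notin U j) (nth [::] C i)) /\
    (forall i, i < size C -> properly_intersects (U i) (nth [::] C i)).

End Digraph.

(* For each terminal s fix, for every cycle C, a tight s-cut W_s(C) properly
   intersecting C, and colour an ordered pair (C, C') by the positions (inside,
   outside or across) of C' with respect to W_s(C) and of C with respect to
   W_s(C'), for all s at once.  An ordered Ramsey argument yields q + k cycles on
   which this colouring is constant.  A tight s-cut properly intersects at most k
   disjoint cycles, as each such cycle sends a distinct arc out of it; this rules
   out the position "across".  By submodularity of the out-degree, tight s-cuts
   are closed under union and intersection, so if every W_s(C) contained (resp.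
   avoided) all the other cycles, the intersection (resp. union) of these cuts
   would be a tight s-cut properly intersecting all q + k cycles.  The two
   remaining patterns say precisely that the cycles, in one order or the other,
   are s-ordered by the cuts W_s(C). *)

From mathcomp Require Import all_boot zify.
Set Implicit Arguments. Unset Strict Implicit. Unset Printing Implicit Defensive.

Lemma card_le_of_disjoint_family (T I : finType) (F : I -> {set T}) (X : {set T}) :
  (forall i, F i != set0) -> (forall i j, i != j -> [disjoint F i & F j]) ->
  (forall i, F i \subset X) -> #|I| <= #|X|.
Proof.
move=> F_neq0 F_disj F_sub.
have cover_sub : \bigcup_i F i \subset X by apply/bigcupsP => i _; exact: F_sub.
apply: leq_trans (subset_leq_card cover_sub).
rewrite -sum1_card (partition_disjoint_bigcup addn (fun=> 1) F_disj) -sum1_card.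
by apply: leq_sum => i _; rewrite sum1_card card_gt0.
Qed.

Section Pigeonhole.
Variables (K : finType) (T : Type) (f : T -> K).

Lemma size_sum_count s : size s = \sum_(a : K) count (fun x => f x == a) s.
Proof.
elim: s => [|x s IH] /=; first by rewrite big1.
by rewrite big_split /= -IH (bigD1 (f x)) //= eqxx big1 // => a /negbTE; rewrite eq_sym => ->.
Qed.

Lemma pigeonhole g s : #|K| * g < size s -> exists a, g < count (fun x => f x == a) s.
Proof.
move=> large; apply/existsP; apply: contraLR large; rewrite negb_exists => /forallP small.
rewrite -leqNgt size_sum_count -sum_nat_const.
by apply: leq_sum => a _; rewrite leqNgt small.
Qed.

End Pigeonhole.

(* Ordered Ramsey: repeatedly keep the head x of the sequence together with the
   most frequent colour c of the pairs (x, y), and only the y with that colour;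
   a colour recorded most often among the kept heads is then monochromatic. *)
Section OrderedRamsey.
Variable K : finType.

Fixpoint greedy_bound m := if m is m'.+1 then #|K| * greedy_bound m' + 1 else 0.

Definition ramsey_bound n := (greedy_bound (#|K| * n).+1).+1.

Variables (T : eqType) (col : T -> T -> K).

Lemma greedy_sequence m s : greedy_bound m < size s ->
  exists L : seq (T * K), [/\ size L = m, subseq (map fst L) s &
    pairwise (fun p p' => col p.1 p'.1 == p.2) L].
Proof.
elim: m s => [|m IH] s large; first by exists [::]; rewrite sub0seq.
case: s large => [|x s] //= large; rewrite addn1 ltnS in large.
have [c many] := pigeonhole (col x) large.
have many' : greedy_bound m < size [seq y <- s | col x y == c] by rewrite size_filter.
have [L [sizeL subL pairL]] := IH _ many'.
exists ((x, c) :: L); split => /=; first by rewrite sizeL.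
  by rewrite eqxx (subseq_trans subL) ?filter_subseq.
rewrite pairL andbT; apply/allP => p /(map_f fst) /(mem_subseq subL).
by rewrite mem_filter => /andP[].
Qed.

Lemma ordered_ramsey n s : ramsey_bound n <= size s ->
  exists s' c, [/\ subseq s' s, size s' = n & pairwise (fun x y => col x y == c) s'].
Proof.
move=> /greedy_sequence [L [sizeL subL pairL]].
have [c many] : exists c, n < count (fun p => p.2 == c) L.
  by apply: pigeonhole; rewrite sizeL.
set Lc := [seq p <- L | p.2 == c].
exists (take n (map fst Lc)), c; split.
- exact: subseq_trans (take_subseq _ _) (subseq_trans (map_subseq _ (filter_subseq _ _)) subL).
- by rewrite size_takel // size_map size_filter ltnW.
apply: subseq_pairwise (take_subseq _ _) _; rewrite pairwise_map.
apply: sub_in_pairwise (filter_all _ _) (pairwise_filter _ pairL).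
by move=> p p' /eqP <- _.
Qed.

End OrderedRamsey.

Section Digraph.
Variables (V A : finType) (tl hd : A -> V).
Implicit Types (U X Y : {set V}) (C : seq V).

Definition leaving U : {set A} := [set a | (tl a \in U) && (hd a \notin U)].

Lemma out_degE U : out_deg tl hd U = #|leaving U|.
Proof. by []. Qed.

Lemma walk_leaves U x y p : is_walk tl hd x y p -> x \in U -> y \notin U ->
  exists2 a, a \in p & a \in leaving U.
Proof.
elim: p x => [|a p IH] x /=; first by move=> /eqP -> ->.
move=> /andP[/eqP tl_a walk_p] xU yU.
have [hdU | hdNU] := boolP (hd a \in U).
  by have [b bp bU] := IH _ walk_p hdU yU; exists b; rewrite // inE bp orbT.
by exists a; rewrite ?mem_head // inE tl_a xU.
Qed.

(* A cycle meeting both U and its complement cannot have all its arcs preserve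
   membership in U, because that relation is transitive. *)
Lemma dcycle_leaves U C : dcycle tl hd C -> properly_intersects U C ->
  exists2 a, tl a \in C & a \in leaving U.
Proof.
move=> /and3P[_ _ cycC] /andP[/hasP[v vC vU] /hasP[w wC wU]].
case: (pickP [pred a | (tl a \in C) && (a \in leaving U)]) => [a /andP[] | none].
  by exists a.
have : cycle (fun x y => (x \in U) ==> (y \in U)) C.
  apply: sub_in_cycle (allss C) cycC => x y xC _ /existsP[a /andP[/eqP tl_a /eqP hd_a]].
  apply/implyP; rewrite -tl_a -hd_a => tlU; apply: contraFT (none a) => hdNU.
  by rewrite /= inE tlU hdNU tl_a xC.
rewrite cycle_all2rel; last by move=> y x z /implyP xy /implyP yz; apply/implyP => /xy/yz.
by move=> /allrelP/(_ v w vC wC); rewrite vU (negbTE wU).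
Qed.

Lemma s_cut_out_deg k r s U : k_arc_disjoint_paths tl hd k r s -> s_cut r s U ->
  k <= out_deg tl hd U.
Proof.
move=> [P [P_path P_disj]] /andP[rU sNU]; rewrite out_degE -[k]card_ord.
apply: (@card_le_of_disjoint_family _ _ (fun i => [set a in leaving U | a \in P i])).
- move=> i; have /andP[walk_i _] := P_path i.
  have [a ai aU] := walk_leaves walk_i rU sNU.
  by apply/set0Pn; exists a; rewrite inE aU.
- move=> i j ij; have sub l : [set a in leaving U | a \in P l] \subset P l.
    by apply/subsetP => a; rewrite inE => /andP[].
  exact: disjointWl (sub i) (disjointWr (sub j) (P_disj _ _ ij)).
- by move=> i; apply/subsetP => a; rewrite inE => /andP[].
Qed.

Lemma out_deg_submodular X Y :
  out_deg tl hd (X :|: Y) + out_deg tl hd (X :&: Y) <= out_deg tl hd X + out_deg tl hd Y.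
Proof.
rewrite !out_degE -cardsUI -(cardsUI (leaving X)).
by apply: leq_add; apply: subset_leq_card; apply/subsetP => a; rewrite !inE;
  case: (tl a \in X); case: (tl a \in Y); case: (hd a \in X); case: (hd a \in Y).
Qed.

Lemma properly_intersected_cycles_le_out_deg U Ds :
  all (dcycle tl hd) Ds -> pairwise (fun C C' => [disjoint C & C']) Ds ->
  all (properly_intersects U) Ds -> size Ds <= out_deg tl hd U.
Proof.
move=> Ds_cycles /(pairwiseP [::]) Ds_disj Ds_cross; rewrite out_degE -[size Ds]card_ord.
pose F (i : 'I_(size Ds)) := [set a in leaving U | tl a \in nth [::] Ds i].
apply: (@card_le_of_disjoint_family _ _ F).
- move=> i; have Di := mem_nth [::] (ltn_ord i).
  have [a tla aU] := dcycle_leaves (allP Ds_cycles _ Di) (allP Ds_cross _ Di).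
  by apply/set0Pn; exists a; rewrite inE aU.
- move=> i j ij; have disj_ij : [disjoint nth [::] Ds i & nth [::] Ds j].
    case: (ltngtP i j) => [lt_ij | lt_ji | /val_inj eq_ij]; last by rewrite eq_ij eqxx in ij.
      exact: Ds_disj (ltn_ord i) (ltn_ord j) lt_ij.
    by rewrite disjoint_sym; apply: Ds_disj (ltn_ord j) (ltn_ord i) lt_ji.
  apply/pred0P => a /=; rewrite !inE.
  case ai: (tl a \in nth [::] Ds i); last by rewrite !andbF.
  by rewrite (disjointFr disj_ij ai) !andbF.
- by move=> i; apply/subsetP => a; rewrite inE => /andP[].
Qed.

Section TightCuts.
Variables (k : nat) (r s : V).
Local Notation tight := (tight_s_cut tl hd k r s).

Lemma s_ordered_take Cs m : s_ordered tl hd k r s Cs -> s_ordered tl hd k r s (take m Cs).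
Proof.
case=> U [U_tight [U_in [U_out U_cross]]]; exists U; rewrite size_take_min.
split; [|split; [|split]].
- move=> j j_lt; apply: U_tight; lia.
- move=> i j ij j_lt; rewrite nth_take; [apply: U_in ij _ | ]; lia.
- move=> i j ji i_lt; rewrite nth_take; [apply: U_out ji _ | ]; lia.
- move=> i i_lt; rewrite nth_take; [apply: U_cross | ]; lia.
Qed.

Lemma s_ordered_drop Cs m : s_ordered tl hd k r s Cs -> s_ordered tl hd k r s (drop m Cs).
Proof.
case=> U [U_tight [U_in [U_out U_cross]]]; exists (fun j => U (m + j)); rewrite size_drop.
split; [|split; [|split]].
- move=> j j_lt; apply: U_tight; lia.
- move=> i j ij j_lt; rewrite nth_drop; apply: U_in; lia.
- move=> i j ji i_lt; rewrite nth_drop; apply: U_out; lia.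
- move=> i i_lt; rewrite nth_drop; apply: U_cross; lia.
Qed.

Lemma s_ordered_take_either Cs m : m <= size Cs ->
  s_ordered tl hd k r s Cs \/ s_ordered tl hd k r s (rev Cs) ->
  s_ordered tl hd k r s (take m Cs) \/ s_ordered tl hd k r s (rev (take m Cs)).
Proof.
move=> m_le [ordered | ordered]; [left; exact: s_ordered_take | right].
by rewrite -(subKn m_le) -drop_rev; apply: s_ordered_drop.
Qed.

Definition essential_cut C : {set V} :=
  odflt set0 [pick U | tight U && properly_intersects U C].

Lemma essential_cutP C : s_essential tl hd k r s C ->
  tight (essential_cut C) && properly_intersects (essential_cut C) C.
Proof. by case=> U cutU; rewrite /essential_cut; case: pickP => [U' -> | /(_ U)]; rewrite ?cutU. Qed.

Hypothesis paths : k_arc_disjoint_paths tl hd k r s.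

Lemma tight_s_cut_setIU X Y : tight X -> tight Y -> tight (X :&: Y) && tight (X :|: Y).
Proof.
move=> /andP[/andP[rX sNX] /eqP degX] /andP[/andP[rY sNY] /eqP degY].
have cutI : s_cut r s (X :&: Y) by rewrite /s_cut !inE rX rY (negbTE sNX).
have cutU : s_cut r s (X :|: Y) by rewrite /s_cut !inE rX (negbTE sNX) (negbTE sNY).
have := s_cut_out_deg paths cutI; have := s_cut_out_deg paths cutU.
have := out_deg_submodular X Y; rewrite /tight_s_cut cutI cutU degX degY /=.
by move=> submod geU geI; rewrite !eqn_leq geU geI; lia.
Qed.

Lemma tight_s_cut_bigcap n (F : nat -> {set V}) : 0 < n ->
  (forall i, i < n -> tight (F i)) -> tight (\bigcap_(i < n) F i).
Proof.
case: n => // n _; elim: n => [|n IH] F_tight.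
  by rewrite big_ord_recr big_ord0 /= setTI; apply: F_tight.
have tight_prefix : tight (\bigcap_(i < n.+1) F i).
  by apply: IH => i i_lt; apply: F_tight; apply: leqW.
by rewrite big_ord_recr; have /andP[] := tight_s_cut_setIU tight_prefix (F_tight n.+1 (ltnSn _)).
Qed.

Lemma tight_s_cut_bigcup n (F : nat -> {set V}) : 0 < n ->
  (forall i, i < n -> tight (F i)) -> tight (\bigcup_(i < n) F i).
Proof.
case: n => // n _; elim: n => [|n IH] F_tight.
  by rewrite big_ord_recr big_ord0 /= set0U; apply: F_tight.
have tight_prefix : tight (\bigcup_(i < n.+1) F i).
  by apply: IH => i i_lt; apply: F_tight; apply: leqW.
by rewrite big_ord_recr; have /andP[_] := tight_s_cut_setIU tight_prefix (F_tight n.+1 (ltnSn _)).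
Qed.

Definition side U C := (all (fun v => v \in U) C, all (fun v => v \notin U) C).

Lemma side_properly_intersects U C :
  side U C = (false, false) -> properly_intersects U C.
Proof.
case=> /negbT not_in /negbT not_out; apply/andP; split.
  by apply: contraR not_out => /hasPn out; apply/allP.
by apply: contraR not_in => /hasPn out; apply/allP => v /out; rewrite negbK.
Qed.

Section HomogeneousCycles.
Variables (Ds : seq (seq V)) (cut : seq V -> {set V}) (alpha beta : bool * bool).
Hypotheses (Ds_cycles : all (dcycle tl hd) Ds)
  (Ds_disjoint : pairwise (fun C C' => [disjoint C & C']) Ds)
  (Ds_large : k < size Ds)
  (cut_spec : forall C, C \in Ds -> tight (cut C) && properly_intersects (cut C) C)
  (Ds_homogeneous :
    pairwise (fun C C' => (side (cut C) C', side (cut C') C) == (alpha, beta)) Ds).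

Local Notation n := (size Ds).
Local Notation D i := (nth [::] Ds i).

Lemma side_before i j : i < j -> j < n -> side (cut (D i)) (D j) = alpha.
Proof.
by move=> ij j_lt; have /eqP[] := pairwiseP [::] Ds_homogeneous i j (ltn_trans ij j_lt) j_lt ij.
Qed.

Lemma side_after i j : i < j -> j < n -> side (cut (D j)) (D i) = beta.
Proof.
by move=> ij j_lt; have /eqP[] := pairwiseP [::] Ds_homogeneous i j (ltn_trans ij j_lt) j_lt ij.
Qed.

Lemma size_Ds_gt0 : 0 < n.
Proof. exact: leq_ltn_trans (leq0n k) Ds_large. Qed.

Lemma cut_nth_tight i : i < n -> tight (cut (D i)).
Proof. by move=> /(mem_nth [::])/cut_spec/andP[]. Qed.

Lemma cut_nth_crosses i : i < n -> properly_intersects (cut (D i)) (D i).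
Proof. by move=> /(mem_nth [::])/cut_spec/andP[]. Qed.

Lemma no_tight_cut_crosses_all X : tight X ->
  ~ (forall j, j < n -> properly_intersects X (D j)).
Proof.
move=> /andP[_ /eqP degX] /(all_nthP [::]) crosses.
by have := properly_intersected_cycles_le_out_deg Ds_cycles Ds_disjoint crosses; rewrite degX leqNgt Ds_large.
Qed.

Lemma alpha_not_across : alpha != (false, false).
Proof.
apply/eqP => alpha_across; apply: (no_tight_cut_crosses_all (cut_nth_tight size_Ds_gt0)) => j j_lt.
have [-> | j_neq0] := eqVneq j 0; first exact: cut_nth_crosses size_Ds_gt0.
by apply: side_properly_intersects; rewrite side_before // lt0n.
Qed.

Lemma beta_not_across : beta != (false, false).
Proof.
have last_lt : n.-1 < n by rewrite prednK ?size_Ds_gt0.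
apply/eqP => beta_across; apply: (no_tight_cut_crosses_all (cut_nth_tight last_lt)) => j j_lt.
have [-> | j_neq] := eqVneq j n.-1; first exact: cut_nth_crosses last_lt.
by apply: side_properly_intersects; rewrite side_after //; lia.
Qed.

Lemma not_inside_both : ~~ (alpha.1 && beta.1).
Proof.
apply/negP => /andP[alpha_in beta_in].
have inside i j : i < n -> j < n -> i != j -> all (fun v => v \in cut (D i)) (D j).
  move=> i_lt j_lt; case: ltngtP => // [ij | ji] _.
    by have /= -> := congr1 fst (side_before ij j_lt).
  by have /= -> := congr1 fst (side_after ji i_lt).
apply: (no_tight_cut_crosses_all (tight_s_cut_bigcap size_Ds_gt0 cut_nth_tight)) => j j_lt.
have /andP[/hasP[v vD vU] /hasP[w wD wNU]] := cut_nth_crosses j_lt.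
apply/andP; split; apply/hasP; [exists v | exists w] => //.
  apply/bigcapP => i _; have [-> // | ij] := eqVneq (i : nat) j.
  exact: allP (inside _ _ (ltn_ord i) j_lt ij) _ vD.
by apply: contra wNU => /bigcapP/(_ (Ordinal j_lt) isT).
Qed.

Lemma not_outside_both : ~~ (alpha.2 && beta.2).
Proof.
apply/negP => /andP[alpha_out beta_out].
have outside i j : i < n -> j < n -> i != j -> all (fun v => v \notin cut (D i)) (D j).
  move=> i_lt j_lt; case: ltngtP => // [ij | ji] _.
    by have /= -> := congr1 snd (side_before ij j_lt).
  by have /= -> := congr1 snd (side_after ji i_lt).
apply: (no_tight_cut_crosses_all (tight_s_cut_bigcup size_Ds_gt0 cut_nth_tight)) => j j_lt.
have /andP[/hasP[v vD vU] /hasP[w wD wNU]] := cut_nth_crosses j_lt.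
apply/andP; split; apply/hasP; [exists v | exists w] => //.
  by apply/bigcupP; exists (Ordinal j_lt).
apply/bigcupP => -[i _]; have [-> | ij] := eqVneq (i : nat) j; first exact/negP.
exact/negP/(allP (outside _ _ (ltn_ord i) j_lt ij) _ wD).
Qed.

Lemma s_ordered_forward : beta.1 -> alpha.2 -> s_ordered tl hd k r s Ds.
Proof.
move=> beta_in alpha_out; exists (fun j => cut (D j)).
split; [exact: cut_nth_tight | split; [|split; [|exact: cut_nth_crosses]]].
  by move=> i j ij j_lt; have /= -> := congr1 fst (side_after ij j_lt).
by move=> i j ji i_lt; have /= -> := congr1 snd (side_before ji i_lt).
Qed.

Lemma s_ordered_backward : alpha.1 -> beta.2 -> s_ordered tl hd k r s (rev Ds).
Proof.
move=> alpha_in beta_out; exists (fun j => cut (D (n - j.+1))); rewrite size_rev.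
split; [|split; [|split]].
- by move=> j j_lt; apply: cut_nth_tight; lia.
- move=> i j ij j_lt; rewrite nth_rev; last lia.
  have /= -> // := congr1 fst (side_before (_ : n - j.+1 < n - i.+1) (_ : n - i.+1 < n)); lia.
- move=> i j ji i_lt; rewrite nth_rev; last lia.
  have /= -> // := congr1 snd (side_after (_ : n - i.+1 < n - j.+1) (_ : n - j.+1 < n)); lia.
- by move=> i i_lt; rewrite nth_rev //; apply: cut_nth_crosses; lia.
Qed.

Theorem homogeneous_cycles_s_ordered :
  s_ordered tl hd k r s Ds \/ s_ordered tl hd k r s (rev Ds).
Proof.
have := alpha_not_across; have := beta_not_across.
have := not_inside_both; have := not_outside_both.
case: alpha beta s_ordered_forward s_ordered_backward => [[] []] [[] []] /= fwd bwd //;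
  by [left; apply: fwd | right; apply: bwd].
Qed.

End HomogeneousCycles.
End TightCuts.
End Digraph.

Lemma pairwise_disjoint_nth (T : finType) (Cs : seq (seq T)) :
  (forall i j, i < size Cs -> j < size Cs -> i != j ->
     [disjoint nth [::] Cs i & nth [::] Cs j]) ->
  pairwise (fun C C' => [disjoint C & C']) Cs.
Proof. by move=> disj; apply/(pairwiseP [::]) => i j i_lt j_lt /ltn_eqF/negbT; apply: disj. Qed.

Theorem proposition2p4 :
  forall q k t : nat, 0 < q -> 0 < k -> 0 < t ->
  exists f : nat,
  forall (V A : finType) (tl hd : A -> V) (r : V) (S : {set V})
         (Cs : seq (seq V)),
    r \notin S -> #|S| = t ->
    steiner_rooted_k_arc_connected tl hd k r S ->
    (forall C, C \in Cs -> dcycle tl hd C) ->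
    (forall i j, i < size Cs -> j < size Cs -> i != j ->
       [disjoint nth [::] Cs i & nth [::] Cs j]) ->
    f <= size Cs ->
    (forall C s, C \in Cs -> s \in S -> s_essential tl hd k r s C) ->
    exists C : seq (seq V),
      [/\ size C = q, all (fun c => c \in Cs) C &
        forall s, s \in S ->
          s_ordered tl hd k r s C \/ s_ordered tl hd k r s (rev C)].
Proof.
move=> q k t q_gt0 _ _.
pose K := {ffun 'I_t -> (bool * bool) * (bool * bool)}.
exists (ramsey_bound K (q + k)) => V A tl hd r S Cs _ card_S conn cycles disj large essential.
pose cut s := essential_cut tl hd k r s.
pose pattern (C C' : seq V) : K := [ffun i : 'I_t => let s := nth r (enum S) i in
  (side (cut s C) C', side (cut s C') C)].
have [H [c [sub_H size_H hom_H]]] := ordered_ramsey pattern large.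
have in_Cs C : C \in H -> C \in Cs by apply: mem_subseq.
exists (take q H); split; first by rewrite size_takel // size_H leq_addr.
  by apply/allP => C /(mem_subseq (take_subseq _ _)) /in_Cs.
move=> s sS; have s_idx : index s (enum S) < t by rewrite -card_S cardE index_mem mem_enum.
pose i_s := Ordinal s_idx.
have nth_s : nth r (enum S) i_s = s by rewrite nth_index ?mem_enum.
have cycles_H : all (dcycle tl hd) H by apply/allP => C /in_Cs /cycles.
have disj_H := subseq_pairwise sub_H (pairwise_disjoint_nth disj).
have large_H : k < size H by rewrite size_H; lia.
have cut_H C : C \in H -> tight_s_cut tl hd k r s (cut s C) && properly_intersects (cut s C) C.
  by move=> /in_Cs C_in; apply/essential_cutP/essential.
have hom_s : pairwise (fun C C' => (side (cut s C) C', side (cut s C') C)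
                                   == ((c i_s).1, (c i_s).2)) H.
  by apply: sub_pairwise hom_H => C C' /eqP <-; rewrite ffunE /= nth_s.
apply: s_ordered_take_either; first by rewrite size_H leq_addr.
exact: (homogeneous_cycles_s_ordered (conn s sS) cycles_H disj_H large_H cut_H hom_s).
Qed.
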